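(* For every nonzero $\xi\in\mathbb{R}^4$ the sequence $0\leftarrow\mathbb{C}^3\xleftarrow{D_0(\xi)^t}\mathbb{C}^4\xleftarrow{D_1(\xi)^t}\mathbb{C}^1\leftarrow0$ is exact, i.e. $D_0(\xi)^t$ is surjective, $D_1(\xi)^t$ is injective and $\operatorname{Im}D_1(\xi)^t=\ker D_0(\xi)^t$.
   Context: With $\eta_0=\xi_0-i\xi_1$, $\eta_1=\xi_2-i\xi_3$ (so $\bar\eta_0=\xi_0+i\xi_1$, $\bar\eta_1=\xi_2+i\xi_3$ for real $\xi$), the symbol matrices (obtained from the 2-Cauchy–Fueter operators by replacing $\partial_{x_j}$ by $\frac1i\xi_j$), with $t$ denoting transpose, are $D_0(\xi)^t=\frac1i\begin{pmatrix}-\bar\eta_1&\eta_0&0&0\\-\bar\eta_0&-\eta_1&-\bar\eta_1&\eta_0\\0&0&-\bar\eta_0&-\eta_1\end{pmatrix}$ and $D_1(\xi)^t=\frac1i\begin{pmatrix}-\eta_0\\-\bar\eta_1\\\eta_1\\-\bar\eta_0\end{pmatrix}$. *)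

From HB Require Import structures.
From mathcomp Require Import all_boot all_order all_algebra.
From mathcomp Require Import complex.
From mathcomp Require Import reals.
Set Implicit Arguments. Unset Strict Implicit. Unset Printing Implicit Defensive.
Import Order.TTheory GRing.Theory Num.Theory.
Local Open Scope ring_scope.
Local Open Scope complex_scope.

Section Symbols.
Variable R : realType.
Notation C := (R[i]).

Definition cx (a : R) : C := a%:C.

Definition eta0 (xi : 'rV[R]_4) : C := cx (xi 0 0) - 'i * cx (xi 0 1).
Definition eta1 (xi : 'rV[R]_4) : C := cx (xi 0 2) - 'i * cx (xi 0 3).
Definition eta0b (xi : 'rV[R]_4) : C := cx (xi 0 0) + 'i * cx (xi 0 1).
Definition eta1b (xi : 'rV[R]_4) : C := cx (xi 0 2) + 'i * cx (xi 0 3).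

Definition D0t (xi : 'rV[R]_4) : 'M[C]_(3,4) :=
  ('i)^-1 *: \matrix_(i < 3, j < 4)
    nth 0 (nth [::] [:: [:: - eta1b xi; eta0 xi; 0; 0];
        [:: - eta0b xi; - eta1 xi; - eta1b xi; eta0 xi];
        [:: 0; 0; - eta0b xi; - eta1 xi]] i) j.

Definition D1t (xi : 'rV[R]_4) : 'M[C]_(4,1) :=
  ('i)^-1 *: \matrix_(i < 4, j < 1)
    [:: - eta0 xi; - eta1b xi; eta1 xi; - eta0b xi]`_i.
End Symbols.

From HB Require Import structures.
From mathcomp Require Import all_boot all_order all_algebra.
From mathcomp Require Import complex.
From mathcomp Require Import reals.
From mathcomp Require Import ring.
Import Order.TTheory GRing.Theory Num.Theory.
Local Open Scope ring_scope.

(* The complex splits: for xi <> 0 there are matrices S and T, rational in the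
   eta's with denominator N = eta0 eta0b + eta1 eta1b = |xi|^2, such that S is a
   right inverse of D0(xi)^t, T a left inverse of D1(xi)^t, and
   S D0(xi)^t + D1(xi)^t T = 1.  Such a contracting homotopy gives exactness
   by pure matrix algebra. *)

Lemma split_complex_exact {K : pzRingType} {m n p : nat}
    {A : 'M[K]_(m, n)} {B : 'M[K]_(n, p)} {S : 'M[K]_(n, m)} {T : 'M[K]_(p, n)} :
  A *m S = 1%:M -> T *m B = 1%:M -> S *m A + B *m T = 1%:M -> A *m B = 0 ->
  [/\ (forall w : 'cV[K]_m, exists v : 'cV[K]_n, A *m v = w),
      (forall u : 'cV[K]_p, B *m u = 0 -> u = 0) &
      (forall v : 'cV[K]_n, A *m v = 0 <-> exists u : 'cV[K]_p, v = B *m u)].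
Proof.
move=> AS1 TB1 homotopy AB0; split.
- by move=> w; exists (S *m w); rewrite mulmxA AS1 mul1mx.
- by move=> u Bu0; rewrite -[u]mul1mx -TB1 -mulmxA Bu0 mulmx0.
- move=> v; split => [Av0 | [u ->]]; last by rewrite mulmxA AB0 mul0mx.
  exists (T *m v).
  by rewrite -[v in LHS]mul1mx -homotopy mulmxDl -!mulmxA Av0 mulmx0 add0r.
Qed.

Lemma sum_sqr_rV_eq0 (K : realDomainType) (n : nat) (v : 'rV[K]_n) :
  (\sum_j v 0 j ^+ 2 == 0) = (v == 0).
Proof.
rewrite psumr_eq0 => [|j _]; last exact: sqr_ge0.
apply/idP/eqP => [/allP v0 | ->]; last first.
  by apply/allP => j _; rewrite mxE expr2 mul0r eqxx.
apply/matrixP => i j; rewrite ord1 mxE; apply/eqP; rewrite -sqrf_eq0.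
exact: v0 (mem_index_enum j).
Qed.

Lemma big_ord4 (K : nmodType) (F : 'I_4 -> K) :
  \sum_j F j = F 0 + F 1 + F 2 + F 3.
Proof.
rewrite !big_ord_recr big_ord0 /= add0r.
by do 3 ?congr (_ + _); congr F; apply: val_inj.
Qed.

Lemma eta_norm (R : realType) (xi : 'rV[R]_4) :
  eta0 xi * eta0b xi + eta1 xi * eta1b xi = ((\sum_j xi 0 j ^+ 2)%:C)%C.
Proof.
rewrite big_ord4 /eta0 /eta0b /eta1 /eta1b /cx.
by apply/eqP; rewrite eq_complex /=; apply/andP; split; apply/eqP; ring.
Qed.

Lemma eta_norm_neq0 {R : realType} {xi : 'rV[R]_4} :
  xi != 0 -> eta0 xi * eta0b xi + eta1 xi * eta1b xi != 0.
Proof.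
by rewrite eta_norm eq_complex /= eqxx andbT sum_sqr_rV_eq0.
Qed.

Section Homotopy.
Context {R : realType} {xi : 'rV[R]_4}.
Local Notation a := (eta0 xi).
Local Notation ab := (eta0b xi).
Local Notation b := (eta1 xi).
Local Notation bb := (eta1b xi).
Local Notation N := (a * ab + b * bb).
Hypothesis N_neq0 : N != 0.

Definition D0t_rinv : 'M[R[i]]_(4, 3) :=
  \matrix_(j < 4, k < 3) ('i * nth 0 (nth [::]
    [:: [:: - b / N; - a / (2 * N); 0];
        [:: ab / N; - bb / (2 * N); 0];
        [:: 0; - b / (2 * N); - a / N];
        [:: 0; ab / (2 * N); - bb / N]] j) k).

Definition D1t_linv : 'M[R[i]]_(1, 4) :=
  \matrix_(i < 1, j < 4) ('i / (2 * N) * [:: - ab; - b; bb; - a]`_j).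

Ltac entrywise_field :=
  apply/matrixP => -[[|[|[|[|?]]]] ?] -[[|[|[|[|?]]]] ?] //;
  rewrite !mxE ?big_ord_recr ?big_ord0 /= !mxE /=;
  field; rewrite ?N_neq0 ?neq0Ci ?pnatr_eq0.

Lemma D0t_mul_rinv : D0t xi *m D0t_rinv = 1%:M.
Proof. by entrywise_field. Qed.

Lemma D1t_linv_mul : D1t_linv *m D1t xi = 1%:M.
Proof. by entrywise_field. Qed.

Lemma D0t_D1t_homotopy : D0t_rinv *m D0t xi + D1t xi *m D1t_linv = 1%:M.
Proof. by entrywise_field. Qed.

End Homotopy.

Lemma D0t_mul_D1t (R : realType) (xi : 'rV[R]_4) : D0t xi *m D1t xi = 0.
Proof.
apply/matrixP => i j; rewrite !mxE !big_ord_recr big_ord0 /= !mxE /=.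
case: i => [[|[|[|//]]] ?] /=; field; exact: neq0Ci.
Qed.

Theorem lemma3p1 (R : realType) (xi : 'rV[R]_4) (hxi : xi != 0) :
  [/\ (forall w : 'cV[R[i]]_3, exists v : 'cV[R[i]]_4, D0t xi *m v = w),
      (forall u : 'cV[R[i]]_1, D1t xi *m u = 0 -> u = 0) &
      (forall v : 'cV[R[i]]_4,
         D0t xi *m v = 0 <-> exists u : 'cV[R[i]]_1, v = D1t xi *m u)].
Proof.
have N_neq0 := eta_norm_neq0 hxi.
exact: split_complex_exact (D0t_mul_rinv N_neq0) (D1t_linv_mul N_neq0)
  (D0t_D1t_homotopy N_neq0) (D0t_mul_D1t R xi).
Qed.
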